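(* Let $\varphi:M\to M'$ be a homomorphism of abelian groups such that $\mathrm{Ker}\,\varphi$ is finite and $(\mathrm{Coker}\,\varphi)_{\mathrm{div}}=0$. If $M_{\mathrm{div}}$ or $M'_{\mathrm{div}}$ is uniquely divisible, then $\varphi$ induces an isomorphism $M_{\mathrm{div}}\xrightarrow{\cong}M'_{\mathrm{div}}$.
   Context: For an abelian group $A$, $A_{\mathrm{div}}$ denotes its maximal divisible subgroup. *)

From mathcomp Require Import all_boot all_order all_algebra.
Set Implicit Arguments. Unset Strict Implicit. Unset Printing Implicit Defensive.
Import GRing.Theory.
Local Open Scope ring_scope.

Definition is_subgroup (M : zmodType) (S : M -> Prop) : Prop :=
  S 0 /\ (forall x y, S x -> S y -> S (x - y)).

Definition divisible_in (M : zmodType) (S : M -> Prop) : Prop :=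
  forall x, S x -> forall n : nat, (0 < n)%N -> exists y, S y /\ y *+ n = x.

Definition uniquely_divisible_in (M : zmodType) (S : M -> Prop) : Prop :=
  divisible_in S /\
  forall (x y : M) (n : nat), S x -> S y -> (0 < n)%N -> x *+ n = y *+ n -> x = y.

(* A_div : the maximal divisible subgroup = union of all divisible subgroups *)
Definition div_part (M : zmodType) : M -> Prop :=
  fun x => exists S : M -> Prop, [/\ is_subgroup S, divisible_in S & S x].

Definition kernel (M M' : zmodType) (f : M -> M') : M -> Prop :=
  fun x => f x = 0.

Definition image (M M' : zmodType) (f : M -> M') : M' -> Prop :=
  fun y => exists x, f x = y.

Definition finite_set (M : zmodType) (S : M -> Prop) : Prop :=
  exists s : seq M, forall x, S x -> x \in s.

(* (Coker f)_div = 0, unfolded through the correspondence between subgroups of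
   Coker f = M' / im f and subgroups P of M' containing im f:
   P / im f is divisible iff for y in P and n > 0 there is z in P with
   z *+ n - y in im f. The condition says every such P is contained in im f,
   i.e. every divisible subgroup of Coker f is zero. *)
Definition coker_div_trivial (M M' : zmodType) (f : M -> M') : Prop :=
  forall P : M' -> Prop,
    is_subgroup P ->
    (forall y, image f y -> P y) ->
    (forall y, P y -> forall n : nat, (0 < n)%N ->
        exists z, P z /\ image f (z *+ n - y)) ->
    forall y, P y -> image f y.

From Pilot Require Import Defs.
From mathcomp Require Import all_boot all_order all_algebra.
Set Implicit Arguments. Unset Strict Implicit. Unset Printing Implicit Defensive.
Import GRing.Theory.
Local Open Scope ring_scope.

(* Let e > 0 kill the finite kernel. Injectivity: an element z of M_div with
   phi z = 0 satisfies z *+ e = 0; if M_div is uniquely divisible this forces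
   z = 0, and if M'_div is, write z = w *+ e with w in M_div: then
   (phi w) *+ e = 0 forces phi w = 0, so z = w *+ e = 0.
   Surjectivity: M'_div + im phi maps onto a divisible subgroup of Coker phi,
   so M'_div lies in im phi. Multiplying by e then corrects the kernel
   ambiguity of preimages: e * phi^-1(M'_div) is a divisible subgroup of M,
   hence lies in M_div, and its image is e * M'_div = M'_div. *)

Section Subgroups.
Variable M : zmodType.
Implicit Types (S : M -> Prop) (x y : M).

Lemma subgroup_mulrn S x n : is_subgroup S -> S x -> S (x *+ n).
Proof.
move=> [S0 SB] Sx; elim: n => [|n IHn]; first by rewrite mulr0n.
by rewrite mulrSr -[x in _ + x]opprK -[- x]sub0r; apply: (SB) => //; apply: (SB).
Qed.

Lemma mulrn_eq0_le_size x (s : seq M) :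
  (forall i, x *+ i \in s) -> exists2 k, (0 < k <= size s)%N & x *+ k = 0.
Proof.
move=> xs; set t := [seq x *+ i | i <- iota 0 (size s).+1].
have /(uniqPn 0) [i [j [lt_ij lt_jt eq_ij]]] : ~~ uniq t.
  apply/negP => /uniq_leq_size le_ts.
  have /le_ts : {subset t <= s} by move=> _ /mapP [i _ ->]; exact: xs.
  by rewrite size_map size_iota ltnn.
rewrite size_map size_iota in lt_jt.
have lt_it := ltn_trans lt_ij lt_jt.
rewrite !(nth_map 0%N) ?size_iota // !nth_iota // !add0n in eq_ij.
exists (j - i)%N; first by rewrite subn_gt0 lt_ij (leq_trans (leq_subr _ _)).
by rewrite mulrnBr ?(ltnW lt_ij) // eq_ij subrr.
Qed.

(* Every order is at most [size s], so [(size s)`!] is a common exponent. *)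
Lemma finite_subgroup_exponent S :
  is_subgroup S -> finite_set S ->
  exists2 e, (0 < e)%N & forall x, S x -> x *+ e = 0.
Proof.
move=> subS [s Ss]; exists (size s)`!; first exact: fact_gt0.
move=> x Sx; have [k k_range xk0] :=
  mulrn_eq0_le_size (fun i => Ss _ (subgroup_mulrn i subS Sx)).
by rewrite -(divnK (dvdn_fact k_range)) mulnC mulrnA xk0 mul0rn.
Qed.

Lemma uniquely_divisible_mulrn_eq0 S x n :
  uniquely_divisible_in S -> S 0 -> S x -> (0 < n)%N -> x *+ n = 0 -> x = 0.
Proof. by move=> [_ uniqS] S0 Sx n_gt0 xn0; apply: (uniqS _ _ n); rewrite ?mul0rn. Qed.

Lemma div_part0 : @div_part M 0.
Proof.
exists (fun x => x = 0); split=> //.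
  by split=> // x y -> ->; rewrite subrr.
by move=> x -> n _; exists 0; rewrite mul0rn.
Qed.

Lemma div_partB x y : div_part x -> div_part y -> div_part (x - y).
Proof.
move=> [S1 [[S10 S1B] divS1 S1x]] [S2 [[S20 S2B] divS2 S2y]].
exists (fun z => exists a b, [/\ S1 a, S2 b & z = a + b]); split.
- split; first by exists 0, 0; rewrite addr0.
  move=> _ _ [a [b [S1a S2b ->]]] [a' [b' [S1a' S2b' ->]]].
  exists (a - a'), (b - b'); split; [exact: S1B | exact: S2B |].
  by rewrite opprD addrACA.
- move=> _ [a [b [S1a S2b ->]]] n n_gt0.
  have [a1 [S1a1 <-]] := divS1 a S1a n n_gt0.
  have [b1 [S2b1 <-]] := divS2 b S2b n n_gt0.
  by exists (a1 + b1); split; [exists a1, b1 | rewrite mulrnDl].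
- by exists x, (- y); split=> //; rewrite -sub0r; apply: S2B.
Qed.

Lemma div_part_divisible : divisible_in (@div_part M).
Proof.
move=> x [S [subS divS Sx]] n n_gt0.
have [y [Sy <-]] := divS x Sx n n_gt0.
by exists y; split=> //; exists S.
Qed.

End Subgroups.

Section AdditiveMaps.
Variables (M M' : zmodType) (phi : {additive M -> M'}).

Lemma kernel_subgroup : is_subgroup (kernel phi).
Proof. by split=> [|x y]; rewrite /kernel ?raddf0 // raddfB => -> ->; rewrite subrr. Qed.

Lemma div_part_additive x : div_part x -> div_part (phi x).
Proof.
move=> [S [[S0 SB] divS Sx]].
exists (fun y => exists x, S x /\ phi x = y); split; last by exists x.
- split; first by exists 0; rewrite raddf0.
  move=> _ _ [a [Sa <-]] [b [Sb <-]].
  by exists (a - b); split; [apply: SB | apply: raddfB].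
- move=> _ [a [Sa <-]] n n_gt0; have [b [Sb <-]] := divS a Sa n n_gt0.
  by exists (phi b); split; [exists b | rewrite raddfMn].
Qed.

(* [S + im phi] is a subgroup whose quotient by [im phi] is divisible. *)
Lemma divisible_sub_image (S : M' -> Prop) y :
  coker_div_trivial phi -> is_subgroup S -> divisible_in S -> S y -> Defs.image phi y.
Proof.
move=> cokerS [S0 SB] divS Sy.
apply: (cokerS (fun y => exists a b, S a /\ y = a + phi b)).
- split; first by exists 0, 0; rewrite raddf0 addr0.
  move=> _ _ [a [b [Sa ->]]] [a' [b' [Sa' ->]]].
  exists (a - a'), (b - b'); split; first exact: SB.
  by rewrite raddfB opprD addrACA.
- by move=> _ [b <-]; exists 0, b; rewrite add0r.
- move=> _ [a [b [Sa ->]]] n n_gt0.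
  have [a1 [Sa1 <-]] := divS a Sa n n_gt0.
  exists a1; split; first by exists a1, 0; rewrite raddf0 addr0.
  by exists (- b); rewrite raddfN opprD addNKr.
- by exists y, 0; rewrite raddf0 addr0.
Qed.

Lemma div_part_sub_image y :
  coker_div_trivial phi -> div_part y -> Defs.image phi y.
Proof. by move=> cokerS [S [subS divS Sy]]; apply: divisible_sub_image Sy. Qed.

Section KernelExponent.
Variable e : nat.
Hypothesis e_gt0 : (0 < e)%N.
Hypothesis kerE : forall x, kernel phi x -> x *+ e = 0.

Lemma div_part_kernel_eq0 z :
  uniquely_divisible_in (@div_part M) \/ uniquely_divisible_in (@div_part M') ->
  div_part z -> phi z = 0 -> z = 0.
Proof.
move=> [udM | udM'] Dz phiz0.
  exact: (uniquely_divisible_mulrn_eq0 udM (div_part0 M) Dz e_gt0 (kerE phiz0)).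
have [w [Dw wz]] := div_part_divisible Dz e_gt0.
have phiw0 : phi w = 0.
  apply: (uniquely_divisible_mulrn_eq0 udM' (div_part0 M') (div_part_additive Dw) e_gt0).
  by rewrite -raddfMn wz.
by rewrite -wz kerE.
Qed.

(* Two preimages of the same element differ by a kernel element, which [*+ e]
   kills; this makes [e * phi^-1(M'_div)] divisible. *)
Lemma mulrn_preimage_div_part x :
  (forall y, div_part y -> Defs.image phi y) ->
  div_part (phi x) -> div_part (x *+ e).
Proof.
move=> imM' Dx.
exists (fun z => exists x0, div_part (phi x0) /\ z = x0 *+ e); split.
- split; first by exists 0; rewrite raddf0 mul0rn; split=> //; apply: div_part0.
  move=> _ _ [a [Da ->]] [b [Db ->]].
  by exists (a - b); rewrite raddfB mulrnBl; split=> //; apply: div_partB.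
- move=> _ [a [Da ->]] n n_gt0.
  have [y [Dy yn]] := div_part_divisible Da n_gt0.
  have [b phib] := imM' y Dy.
  exists (b *+ e); split; first by exists b; rewrite phib.
  have ker_ba : kernel phi (b *+ n - a) by rewrite /kernel raddfB raddfMn phib yn subrr.
  by apply/eqP; rewrite -subr_eq0 -mulrnAC -mulrnBl (kerE ker_ba).
- by exists x.
Qed.

End KernelExponent.
End AdditiveMaps.

Theorem lemma2p7 (M M' : zmodType) (phi : {additive M -> M'}) :
  finite_set (kernel phi) ->
  coker_div_trivial phi ->
  (uniquely_divisible_in (@div_part M) \/ uniquely_divisible_in (@div_part M')) ->
  [/\ (forall x, div_part x -> div_part (phi x)),
      (forall x y, div_part x -> div_part y -> phi x = phi y -> x = y)
    & (forall y, div_part y -> exists x, div_part x /\ phi x = y)].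
Proof.
move=> finK cokerS ud.
have [e e_gt0 kerE] := finite_subgroup_exponent (kernel_subgroup phi) finK.
split.
- exact: div_part_additive.
- move=> x y Dx Dy phixy; apply/eqP; rewrite -subr_eq0; apply/eqP.
  apply: (div_part_kernel_eq0 e_gt0 kerE ud); first exact: div_partB.
  by rewrite raddfB phixy subrr.
- move=> y Dy; have [y0 [Dy0 <-]] := div_part_divisible Dy e_gt0.
  have [x0 phix0] := div_part_sub_image cokerS Dy0.
  exists (x0 *+ e); split; last by rewrite raddfMn phix0.
  apply: (mulrn_preimage_div_part kerE) => [y'|]; last by rewrite phix0.
  exact: div_part_sub_image.
Qed.
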